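(* Let $p$ be a prime and let $\mathcal{F}$ be a linear, affine-invariant family of functions $\mathbb{F}_p^n\to\mathbb{F}_p$. Suppose $x^e\in\mathcal{F}$ for some $e\in\{0,\dots,p-1\}^n$. Then $x^{e'}\in\mathcal{F}$ for every $e'\in\{0,\dots,p-1\}^n$ with $|e'|_1\leq|e|_1$.
   Context: For $e\in\{0,\dots,p-1\}^n$, $x^e$ denotes the function $x\mapsto\prod_{i=1}^n x_i^{e_i}$ on $\mathbb{F}_p^n$ (with $0^0=1$), and $|e|_1=\sum_i e_i$. A family $\mathcal{F}$ of functions $\mathbb{F}_p^n\to\mathbb{F}_p$ is linear if it contains the zero function and is closed under $\mathbb{F}_p$-linear combinations; it is affine-invariant if $f\circ T\in\mathcal{F}$ whenever $f\in\mathcal{F}$ and $T:\mathbb{F}_p^n\to\mathbb{F}_p^n$ is an affine transformation. *)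

From mathcomp Require Import all_boot all_order all_algebra.
Set Implicit Arguments. Unset Strict Implicit. Unset Printing Implicit Defensive.
Import GRing.Theory.
Local Open Scope ring_scope.

Definition fn (p n : nat) := 'rV['F_p]_n -> 'F_p.

Definition linear_family (p n : nat) (F : fn p n -> Prop) : Prop :=
  F (fun _ => 0) /\
  (forall (a b : 'F_p) (f g : fn p n), F f -> F g -> F (fun x => a * f x + b * g x)).

Definition affine_map (p n : nat) (A : 'M['F_p]_n) (b : 'rV['F_p]_n)
  : 'rV['F_p]_n -> 'rV['F_p]_n := fun x => x *m A + b.

Definition affine_invariant (p n : nat) (F : fn p n -> Prop) : Prop :=
  forall (f : fn p n) (A : 'M['F_p]_n) (b : 'rV['F_p]_n),
    F f -> F (fun x => f (affine_map A b x)).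

(* Exponent vectors e in {0,...,p-1}^n and monomials x^e (0^0 = 1). *)
Definition monomial (p n : nat) (e : 'I_n -> 'I_p) : fn p n :=
  fun x => \prod_(i < n) x ord0 i ^+ e i.

Definition l1norm (p n : nat) (e : 'I_n -> 'I_p) : nat :=
  (\sum_(i < n) nat_of_ord (e i))%N.

(* Substituting x_i |-> x_i + u(x), with u affine and free of x_i, is an affine map; it
   sends x^e to (x_i + u)^(e_i) * prod_(k <> i) x_k^(e_k).  Averaging the rescalings
   x_i |-> t x_i (t in F_p) with Lagrange weights isolates each power of x_i, so F
   contains e_i x_i^(e_i - 1) u prod_(k <> i) x_k^(e_k), and e_i is invertible in F_p.
   With u = 1 this lowers e_i by one; with u = x_j it moves one unit of degree from
   coordinate i to coordinate j.  Each such step decreases the excess of e over e'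
   while keeping |e|_1 >= |e'|_1, and when the excess vanishes e = e'. *)

From mathcomp Require Import all_boot all_algebra finfield zify ring.
From Stdlib Require Import FunctionalExtensionality.

Set Implicit Arguments. Unset Strict Implicit. Unset Printing Implicit Defensive.
Import GRing.Theory.
Local Open Scope ring_scope.

Section FinFieldInterpolation.

Variable K : finFieldType.

Lemma expf_card_pred (x : K) : x ^+ #|K|.-1 = (x != 0)%:R.
Proof.
have K_gt1 := finNzRing_gt1 K.
have [->|x_neq0] := eqVneq x 0.
  by rewrite expr0n -subn1 subn_eq0 leqNgt K_gt1.
by apply: (mulfI x_neq0); rewrite -exprS prednK ?expf_card ?mulr1 // ltnW.
Qed.

Definition indicator_poly (t : K) : {poly K} := 1 - ('X - t%:P) ^+ #|K|.-1.

Lemma indicator_polyE t s : (indicator_poly t).[s] = (s == t)%:R.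
Proof.
by rewrite !hornerE expf_card_pred subr_eq0; case: eqP => _; rewrite ?subr0 ?subrr.
Qed.

Lemma size_indicator_poly t : (size (indicator_poly t) <= #|K|)%N.
Proof.
rewrite (leq_trans (size_polyD _ _)) // geq_max size_polyN size_exp_XsubC.
by rewrite size_poly1 prednK ?leqnn ?andbT // ltnW // finNzRing_gt1.
Qed.

Lemma indicator_poly_expansion (q : {poly K}) : (size q <= #|K|)%N ->
  q = \sum_t q.[t] *: indicator_poly t.
Proof.
move=> size_q; apply/eqP; rewrite -subr_eq0; apply/eqP.
apply: (@roots_geq_poly_eq0 _ _ (enum K)); rewrite ?enum_uniq //.
  apply/allP => s _; rewrite /root hornerD hornerN horner_sum (bigD1 s) //=.
  rewrite big1 => [|t /negbTE t_neq_s].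
    by rewrite hornerZ indicator_polyE eqxx mulr1 addr0 subrr.
  by rewrite hornerZ indicator_polyE eq_sym t_neq_s mulr0.
rewrite -cardE (leq_trans (size_polyD _ _)) // geq_max size_polyN size_q /=.
apply: (big_ind (fun r : {poly K} => size r <= #|K|)%N) => [|a b sa sb|t _].
- by rewrite size_poly0.
- by rewrite (leq_trans (size_polyD _ _)) // geq_max sa sb.
- exact: leq_trans (size_scale_leq _ _) (size_indicator_poly t).
Qed.

Lemma exists_dual_weights (m : nat) : exists lam : K -> K,
  forall k, (k < #|K|)%N -> \sum_t lam t * t ^+ k = (k == m)%:R.
Proof.
exists (fun t => (indicator_poly t)`_m) => k k_lt.
rewrite eq_sym -coefXn (@indicator_poly_expansion 'X^k) ?size_polyXn // coef_sum.
by apply: eq_bigr => t _; rewrite coefZ hornerXn mulrC.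
Qed.

End FinFieldInterpolation.

Lemma sum_addn_delta (I : finType) (a b : I -> nat) i :
  (forall k, a k + (k == i) = b k)%N -> (\sum_k a k + 1 = \sum_k b k)%N.
Proof.
move=> abE; rewrite -(eq_bigr _ (fun k _ => abE k)) big_split /=; congr (_ + _)%N.
by rewrite (bigD1 i) //= eqxx big1 // => k /negbTE ->.
Qed.

Lemma natr_Fp_neq0 p a : prime p -> (0 < a < p)%N -> (a%:R : 'F_p) != 0.
Proof.
move=> p_prime /andP[a_gt0 a_lt_p]; apply: contraTneq a_gt0 => /(congr1 val).
by rewrite /= val_Fp_nat // modn_small // => ->.
Qed.

Section Exponents.

Variables p n : nat.
Implicit Types e : 'I_n -> 'I_p.
Local Open Scope nat_scope.

(* Truncated subtraction: only the coordinates where e exceeds e' count. *)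
Definition excess e e' : nat := \sum_(k < n) (e k - e' k).

Lemma l1norm_excess e e' : l1norm e' + excess e e' = l1norm e + excess e' e.
Proof. by rewrite /l1norm /excess -!big_split; apply: eq_bigr => k _ /=; lia. Qed.

Lemma excess_eq0 e e' : (excess e e' == 0) = [forall k, e k <= e' k].
Proof. by rewrite sum_nat_eq0; apply: eq_forallb => k; rewrite subn_eq0. Qed.

Lemma monomial_excess0 e e' :
  excess e e' = 0 -> l1norm e' <= l1norm e -> monomial e' = monomial e.
Proof.
move=> ex0 le_norm; have /eqP : excess e' e = 0 by have := l1norm_excess e e'; lia.
rewrite excess_eq0 => /forallP le_e'e; move/eqP: ex0; rewrite excess_eq0 => /forallP le_ee'.
apply: functional_extensionality => x; apply: eq_bigr => k _.
by congr (_ ^+ _); apply/eqP; rewrite eqn_leq le_e'e le_ee'.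
Qed.

Lemma exists_ord_fun (b : 'I_n -> nat) :
  (forall k, b k < p) -> exists e : 'I_n -> 'I_p, forall k, e k = b k :> nat.
Proof. by move=> b_lt_p; exists (fun k => Ordinal (b_lt_p k)). Qed.

Lemma excess_drop e e' e2 i :
  (forall k, e2 k - e' k + (k == i) = e k - e' k) -> excess e2 e' < excess e e'.
Proof. by move=> /sum_addn_delta; rewrite /excess addn1 => <-. Qed.

Lemma exists_decrement e i : 0 < e i -> exists e2, forall k, e2 k + (k == i) = e k.
Proof.
move=> e_i_gt0.
have [e2 e2E] := @exists_ord_fun (fun k => e k - (k == i))
                   (fun k => leq_ltn_trans (leq_subr _ _) (ltn_ord (e k))).
by exists e2 => k; rewrite e2E subnK //; case: eqP => [->|].
Qed.

Lemma exists_decrement_excess e e' i : e' i < e i ->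
  exists e2, (forall k, e2 k + (k == i) = e k) /\ excess e2 e' < excess e e'.
Proof.
move=> lt_i; have [e2 e2E] := exists_decrement (leq_ltn_trans (leq0n _) lt_i).
exists e2; split => //; apply: (excess_drop (i := i)) => k; have := e2E k.
by have [->|_] := eqVneq k i; [lia | rewrite !addn0 => ->].
Qed.

Lemma exists_transfer_excess e e' i j : e' i < e i -> e j < e' j ->
  exists e3, (forall k, e3 k + (k == i) = e k + (k == j)) /\ excess e3 e' < excess e e'.
Proof.
move=> lt_i lt_j; have j_neq_i : j != i by apply: contraTneq lt_i => <-; rewrite -leqNgt ltnW.
have [e3 e3E] : exists e3 : 'I_n -> 'I_p, forall k, e3 k = e k + (k == j) - (k == i) :> nat.
  apply: exists_ord_fun => k /=; have [->|_] := eqVneq k j.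
    by rewrite (negbTE j_neq_i) subn0 addn1 (leq_ltn_trans lt_j).
  by rewrite addn0 (leq_ltn_trans (leq_subr _ _)).
exists e3; split => [k|].
  rewrite e3E subnK //; case: eqP => [->|_] //.
  by rewrite ltn_addr // (leq_ltn_trans (leq0n _) lt_i).
apply: (excess_drop (i := i)) => k; rewrite e3E.
have [->|_] := eqVneq k i; first by rewrite eq_sym (negbTE j_neq_i) addn0; lia.
have [->|_] := eqVneq k j; last by rewrite !addn0 subn0.
by rewrite subn0 addn0 addn1; lia.
Qed.

End Exponents.

Section Coordinates.

Variables p n : nat.

Definition set_coord (i : 'I_n) (v : 'F_p) (x : 'rV['F_p]_n) : 'rV['F_p]_n :=
  \row_l (if l == i then v else x ord0 l).

Definition free_of_coord (i : 'I_n) (c : fn p n) : Prop :=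
  forall v x, c (set_coord i v x) = c x.

Lemma set_coordE i v (x : 'rV['F_p]_n) l :
  set_coord i v x ord0 l = if l == i then v else x ord0 l.
Proof. by rewrite mxE. Qed.

Lemma set_coord_id i (x : 'rV['F_p]_n) : set_coord i (x ord0 i) x = x.
Proof. by apply/rowP => l; rewrite set_coordE; case: eqP => [->|]. Qed.

Definition comonomial (e : 'I_n -> 'I_p) (i : 'I_n) : fn p n :=
  fun x => \prod_(k | k != i) x ord0 k ^+ e k.

Lemma comonomial_free e i : free_of_coord i (comonomial e i).
Proof. by move=> v x; apply: eq_bigr => k /negbTE k_neq_i; rewrite set_coordE k_neq_i. Qed.

Lemma monomial_set_coord e i v (x : 'rV['F_p]_n) :
  monomial e (set_coord i v x) = v ^+ e i * comonomial e i x.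
Proof.
rewrite /monomial (bigD1 i) //= set_coordE eqxx; congr (_ * _).
by apply: eq_bigr => k /negbTE k_neq_i; rewrite set_coordE k_neq_i.
Qed.

Lemma monomial_set_coordD e i v (x : 'rV['F_p]_n) :
  monomial e (set_coord i (v + x ord0 i) x) =
  \sum_(k < p) x ord0 i ^+ k * ('C(e i, k)%:R * v ^+ (e i - k) * comonomial e i x).
Proof.
rewrite monomial_set_coord exprDn mulr_suml.
rewrite (big_ord_widen _ (fun k => v ^+ (e i - k) * x ord0 i ^+ k *+ 'C(e i, k)
                                    * comonomial e i x) (ltn_ord (e i))).
rewrite big_mkcond /=; apply: eq_bigr => k _; case: ifP => [_|/negbT].
  by rewrite -mulr_natr; ring.
by rewrite -leqNgt => /bin_small ->; rewrite !mul0r mulr0.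
Qed.

Lemma monomial_decrement (e e2 : 'I_n -> 'I_p) i (x : 'rV['F_p]_n) :
  (forall k, e2 k + (k == i) = e k)%N ->
  monomial e2 x = x ord0 i ^+ (e i).-1 * comonomial e i x.
Proof.
move=> e2E; rewrite -[in LHS](set_coord_id i x) monomial_set_coord -(e2E i) eqxx addn1.
by congr (_ * _); apply: eq_bigr => k /negbTE k_neq_i; rewrite -(e2E k) k_neq_i addn0.
Qed.

Lemma monomial_mulX (e e' : 'I_n -> 'I_p) j (x : 'rV['F_p]_n) :
  (forall k, e k + (k == j) = e' k)%N -> x ord0 j * monomial e x = monomial e' x.
Proof.
move=> e'E; rewrite /monomial; under [RHS]eq_bigr => k _ do rewrite -e'E exprD.
rewrite big_split /= mulrC; congr (_ * _).
by rewrite (bigD1 j) //= eqxx big1 ?mulr1 // => k /negbTE ->.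
Qed.

End Coordinates.

Section AffineInvariantFamilies.

Variables (p n : nat).
Hypothesis p_prime : prime p.
Variable F : fn p n -> Prop.
Hypotheses (F_linear : linear_family F) (F_affine : affine_invariant F).

Lemma family_eqfun (f g : fn p n) : f =1 g -> F f -> F g.
Proof. by move=> /functional_extensionality ->. Qed.

Lemma linear_family_sum (T : Type) (s : seq T) (lam : T -> 'F_p) (f : T -> fn p n) :
  (forall t, F (f t)) -> F (fun x => \sum_(t <- s) lam t * f t x).
Proof.
case: F_linear => F0 F_comb Ff; elim: s => [|t s IHs].
  by apply: family_eqfun F0 => x; rewrite big_nil.
by apply: family_eqfun (F_comb (lam t) 1 _ _ (Ff t) IHs) => x; rewrite big_cons mul1r.
Qed.

Lemma set_coord_affine i (u : fn p n) (w : 'I_n -> 'F_p) (g : 'F_p) (f : fn p n) :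
  (forall x, u x = \sum_k x ord0 k * w k + g) ->
  F f -> F (fun x => f (set_coord i (u x) x)).
Proof.
move=> uE /(F_affine (\matrix_(k, l) (if l == i then w k else (k == l)%:R))
                    (g *: delta_mx ord0 i)).
apply: family_eqfun => x; congr f; apply/rowP => l.
rewrite set_coordE /affine_map !mxE uE.
have [->|/negbTE l_neq_i] := eqVneq l i.
  by rewrite eqxx mulr1; congr (_ + _); apply: eq_bigr => k _; rewrite !mxE eqxx.
rewrite mulr0 addr0 (bigD1 l) //= big1 => [|k /negbTE k_neq_l].
  by rewrite !mxE l_neq_i eqxx mulr1 addr0.
by rewrite !mxE l_neq_i k_neq_l mulr0.
Qed.

Lemma separate_coord i (c : nat -> fn p n) :
  (forall k, free_of_coord i (c k)) ->
  F (fun x => \sum_(k < p) x ord0 i ^+ k * c k x) ->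
  forall m, (m < p)%N -> F (fun x => x ord0 i ^+ m * c m x).
Proof.
move=> c_free Ff m m_lt_p.
(* Averaging the rescalings x_i |-> t x_i with these weights keeps only the m-th power. *)
have [lam lamE] := @exists_dual_weights 'F_p m.
rewrite card_Fp // in lamE.
set f := fun x : 'rV['F_p]_n => \sum_(k < p) x ord0 i ^+ k * c k x.
have Fscaled t : F (fun x => f (set_coord i (t * x ord0 i) x)).
  apply: (set_coord_affine i (w := fun k => (k == i)%:R * t) (g := 0)) => // x.
  rewrite addr0 (bigD1 i) //= big1 => [|k /negbTE ->]; last by rewrite mul0r mulr0.
  by rewrite eqxx mul1r addr0 mulrC.
apply: family_eqfun (linear_family_sum (index_enum 'F_p) lam Fscaled) => x.
rewrite /f.
have collect k : \sum_t lam t * ((set_coord i (t * x ord0 i) x) ord0 i ^+ k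
                                   * c k (set_coord i (t * x ord0 i) x))
               = (\sum_t lam t * t ^+ k) * (x ord0 i ^+ k * c k x).
  by rewrite mulr_suml; apply: eq_bigr => t _; rewrite set_coordE eqxx c_free exprMn !mulrA.
under eq_bigr do rewrite big_distrr; rewrite exchange_big /=.
under eq_bigr do rewrite collect.
rewrite (bigD1 (Ordinal m_lt_p)) //= lamE // eqxx mul1r big1 ?addr0 // => k k_neq_m.
rewrite lamE // (_ : (k == m :> nat) = false) ?mul0r //.
by apply: contraNF k_neq_m => /eqP k_eq_m; apply/eqP/val_inj.
Qed.

Lemma family_monomial_shift (e e2 : 'I_n -> 'I_p) i (u : fn p n) (w : 'I_n -> 'F_p) g :
  (forall k, e2 k + (k == i) = e k)%N ->
  (forall x, u x = \sum_k x ord0 k * w k + g) -> w i = 0 ->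
  F (monomial e) -> F (fun x => u x * monomial e2 x).
Proof.
move=> e2E uE w_i Fe.
have e_i_gt0 : (0 < e i)%N by rewrite -(e2E i) eqxx addn1.
have u_free : free_of_coord i u.
  move=> v x; rewrite !uE; congr (_ + _); apply: eq_bigr => k _.
  by rewrite set_coordE; case: eqP => [->|]; rewrite ?w_i ?mulr0.
pose c k x := 'C(e i, k)%:R * u x ^+ (e i - k) * comonomial e i x.
have c_free k : free_of_coord i (c k) by move=> v x; rewrite /c u_free comonomial_free.
have substE x : u x + x ord0 i = \sum_k x ord0 k * (w k + (k == i)%:R) + g.
  under eq_bigr do rewrite mulrDr; rewrite big_split /= uE [RHS]addrAC; congr (_ + _).
  by rewrite (bigD1 i) //= eqxx mulr1 big1 ?addr0 // => k /negbTE ->; rewrite mulr0.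
have Fexpanded : F (fun x => \sum_(k < p) x ord0 i ^+ k * c k x).
  by apply: family_eqfun (set_coord_affine i substE Fe) => x; rewrite monomial_set_coordD.
have := separate_coord c_free Fexpanded (leq_ltn_trans (leq_pred _) (ltn_ord (e i))).
case: F_linear => _ F_comb /(fun Fm => F_comb (e i)%:R^-1 0 _ _ Fm Fm).
apply: family_eqfun => x; rewrite mul0r addr0 (monomial_decrement _ e2E).
rewrite /c -subn1 subKn // bin_sub // bin1 expr1.
have e_i_neq0 : (e i)%:R != 0 :> 'F_p by rewrite natr_Fp_neq0 // e_i_gt0 /=.
by field.
Qed.

Lemma family_monomial_decrement (e e2 : 'I_n -> 'I_p) i :
  (forall k, e2 k + (k == i) = e k)%N -> F (monomial e) -> F (monomial e2).
Proof.
move=> e2E Fe.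
have oneE (x : 'rV['F_p]_n) : 1 = \sum_k x ord0 k * 0 + 1.
  by rewrite big1 ?add0r // => k _; rewrite mulr0.
by apply: family_eqfun (family_monomial_shift e2E oneE erefl Fe) => x; rewrite mul1r.
Qed.

Lemma family_monomial_transfer (e e3 : 'I_n -> 'I_p) i j : i != j ->
  (forall k, e3 k + (k == i) = e k + (k == j))%N ->
  F (monomial e) -> F (monomial e3).
Proof.
move=> i_neq_j e3E Fe.
have e_i_gt0 : (0 < e i)%N by have := e3E i; rewrite eqxx (negbTE i_neq_j) addn1 addn0 => <-.
have [e2 e2E] := exists_decrement e_i_gt0.
have e2_raise k : (e2 k + (k == j))%N = e3 k.
  by apply/eqP; rewrite -(eqn_add2r (k == i)) e3E -(e2E k) addnAC.
have xjE (x : 'rV['F_p]_n) : x ord0 j = \sum_k x ord0 k * (k == j)%:R + 0.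
  by rewrite addr0 (bigD1 j) //= eqxx mulr1 big1 ?addr0 // => k /negbTE ->; rewrite mulr0.
have w_i : (i == j)%:R = 0 :> 'F_p by rewrite (negbTE i_neq_j).
apply: family_eqfun (family_monomial_shift e2E xjE w_i Fe) => x.
exact: monomial_mulX.
Qed.

Lemma excess_step (e e' : 'I_n -> 'I_p) :
  F (monomial e) -> (l1norm e' <= l1norm e)%N -> excess e e' != 0%N ->
  exists e2, [/\ F (monomial e2), (l1norm e' <= l1norm e2)%N
              & (excess e2 e' < excess e e')%N].
Proof.
move=> Fe le_norm ex_neq0.
have /forallPn[i] : ~~ [forall k, e k <= e' k]%N by rewrite -excess_eq0.
rewrite -ltnNge => lt_i.
have [/forallP le_e'e | /forallPn[j]] := boolP [forall k, e' k <= e k]%N.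
  have [e2 [e2_lower lt_ex]] := exists_decrement_excess lt_i.
  exists e2; split => //; first exact: family_monomial_decrement e2_lower Fe.
  have /eqP ex0 : excess e' e == 0%N by rewrite excess_eq0; exact/forallP.
  have lt_norm : (l1norm e' < l1norm e)%N.
    by rewrite -[l1norm e]addn0 -ex0 -l1norm_excess -[X in (X < _)%N]addn0 ltn_add2l lt0n.
  by move: lt_norm; rewrite /l1norm -(sum_addn_delta e2_lower) addn1 ltnS.
rewrite -ltnNge => lt_j; have i_neq_j : i != j.
  by apply: contraTneq lt_i => ->; rewrite -leqNgt ltnW.
have [e3 [e3_move lt_ex]] := exists_transfer_excess lt_i lt_j.
exists e3; split => //; first exact: family_monomial_transfer i_neq_j e3_move Fe.
rewrite -(leq_add2r 1) /l1norm (sum_addn_delta e3_move).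
by rewrite -(@sum_addn_delta _ (fun k => e k) _ j (fun k => erefl)) leq_add2r.
Qed.

End AffineInvariantFamilies.

Theorem lemma3p1 (p n : nat) (pp : prime p) (F : fn p n -> Prop)
  (Flin : linear_family F) (Faff : affine_invariant F)
  (e : 'I_n -> 'I_p) (he : F (monomial e)) :
  forall e' : 'I_n -> 'I_p, (l1norm e' <= l1norm e)%N -> F (monomial e').
Proof.
move=> e'; have [N] := ubnP (excess e e'); elim: N => // N IHN in e he *.
rewrite ltnS => le_ex le_norm.
have [ex0|ex_neq0] := eqVneq (excess e e') 0%N.
  by rewrite (monomial_excess0 ex0 le_norm).
have [e2 [Fe2 le_norm2 lt_ex]] := excess_step pp Flin Faff he le_norm ex_neq0.
exact: IHN Fe2 (leq_trans lt_ex le_ex) le_norm2.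
Qed.
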